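(* Let $p$ be a prime, let $C_p\le S_p$ be cyclic of order $p$ acting regularly, and let $k\ge1$. Let $\Omega=\overline{C_p}^k\subseteq\{0,1\}^{kp^2}$. Let $Q=C_p^k$ act on $\Omega$ by $(x_1,\dots,x_k)(M_1,\dots,M_k)=(\overline{x_1}M_1,\dots,\overline{x_k}M_k)$. This is induced by a faithful permutation of the $kp^2$ coordinates, so $Q\le S_{kp^2}$. Let $P=\{(x_1,\dots,x_k)\in C_p^k: x_1x_2\cdots x_k=1\}$. Then $\beta_{Q,\Omega,d}(P,P)\ge p^{d(k^{1/d}-1)}$ for all $d\ge1$, and $\beta_{Q,\Omega}(P,P)\ge p^{\log_2 k}$.
   Context: $\overline{x}$ denotes the permutation matrix of a permutation $x$, and $\overline{C_p}$ is the set of these matrices for $x\in C_p$. General framework. Let $Q\le S_m$ act on $\{0,1\}^m$ by permuting coordinates, and let $\Omega\subseteq\{0,1\}^m$ be $Q$-invariant. For $f$ on $\Omega$, $\mathrm{Stab}_Q(f)=\{\pi\in Q: f(\pi x)=f(x)\ \forall x\in\Omega\}$. $\mathcal B_{Q,\Omega}$ is the set of $\mathrm{Stab}_Q(f)$ for $f:\Omega\to\{0,1\}$, and $\mathcal N_{Q,\Omega}$ is the set of $\mathrm{Stab}_Q(f)$ for $f:\Omega\to\mathbb N$. Let $\chi_i(x)=x_i$. For $H\le K\le Q$ with $K\in\mathcal B_{Q,\Omega}$, define $\beta_{Q,\Omega,d}(H,K)\in\mathbb N\cup\{\infty\}$ inductively. First, $\beta_{Q,\Omega,0}(H,K)$ equals: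 - $0$ if $H=Q$; - $1$ if $H<Q$ and $H=\mathrm{Stab}_Q(\chi_i|_\Omega)$ for some $i$; - $\infty$ otherwise. For $d\ge1$, $\beta_{Q,\Omega,d}(H,K)=\min\max_{i\in[r]}[H_i:H_i\cap U_i]\,\beta_{Q,\Omega,d-1}(U_i,V_i)$. The minimum is over tuples $(r,(H_i),(U_i),(L_i),(V_i))$ with $r\in\mathbb N$, $H_i,U_i\le Q$, $L_i\in\mathcal N_{Q,\Omega}$ and $V_i\in\mathcal B_{Q,\Omega}$ such that: - (a) $U_i\le V_i$ and $H_i\le L_i$; - (b) $\bigcap_i H_i=H$; - (c) $\bigcap_i L_i\le K$; - (d) $\bigcap_{h\in H_i}h^{-1}U_ih\le H_i$; - (e) $\bigcap_{h\in H_i}h^{-1}V_ih\le L_i$. Finally, $\beta_{Q,\Omega}(H,K)=\lim_{d\to\infty}\beta_{Q,\Omega,d}(H,K)$. *)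

From HB Require Import structures.
From mathcomp Require Import all_boot all_order all_algebra all_fingroup all_solvable.
From mathcomp Require Import all_classical all_reals all_analysis.

Set Implicit Arguments.
Unset Strict Implicit.
Unset Printing Implicit Defensive.

Import Order.TTheory GRing.Theory Num.Theory.

(* General framework.  The coordinates of {0,1}^m are indexed by an    *)
(* arbitrary finite type I (with #|I| = m); Q is a set of permutations *)
(* of I (a subgroup of Sym(I) ~ S_m), Om a subset of {0,1}^I.          *)

Section Framework.
Variable R : realType.
Variable I : finType.
Variable Q : {set {perm I}}.
Variable Om : {set {ffun I -> bool}}.

Local Open Scope group_scope.

Definition coord_act (s : {perm I}) (x : {ffun I -> bool}) : {ffun I -> bool} :=
  [ffun j => x ((s^-1)%g j)].

Definition Stab (T : eqType) (f : {ffun I -> bool} -> T) : {set {perm I}} :=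
  [set s in Q | [forall x in Om, f (coord_act s x) == f x]].

Definition inB (K : {set {perm I}}) : Prop :=
  exists f : {ffun I -> bool} -> bool, K = Stab f.
Definition inN (K : {set {perm I}}) : Prop :=
  exists f : {ffun I -> bool} -> nat, K = Stab f.

Local Open Scope ereal_scope.

Definition beta0 (H K : {set {perm I}}) : \bar R :=
  if H == Q then 0
  else if (H \proper Q) && [exists i : I, H == Stab (fun x => x i)] then 1
  else +oo.

Definition admissible (bd : {set {perm I}} -> {set {perm I}} -> \bar R)
    (H K : {set {perm I}}) : set (\bar R) :=
  [set v | exists (r : nat) (Hs Us Ls Vs : 'I_r -> {group {perm I}}),
     (forall i, (Hs i \subset Q) /\ (Us i \subset Q)) /\
     (forall i, inN (Ls i) /\ inB (Vs i)) /\
     (forall i, (Us i \subset Vs i) /\ (Hs i \subset Ls i)) /\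
     Q :&: \bigcap_(i < r) Hs i = H /\
     Q :&: \bigcap_(i < r) Ls i \subset K /\
     (forall i, \bigcap_(h in Hs i) (Us i :^ h) \subset Hs i) /\
     (forall i, \bigcap_(h in Hs i) (Vs i :^ h) \subset Ls i) /\
     v = \big[maxe/0]_(i < r)
               ((#|Hs i : Hs i :&: Us i|%:R)%:E * bd (Us i) (Vs i))].

(* beta_{Q,Om,d}: the minimum over admissible tuples (a minimum of a set
   of values in N u {+oo}, which is its infimum) *)
Fixpoint beta_d (d : nat) : {set {perm I}} -> {set {perm I}} -> \bar R :=
  match d with
  | 0 => beta0
  | d'.+1 => fun H K => ereal_inf (admissible (beta_d d') H K)
  end.

Definition beta (H K : {set {perm I}}) : \bar R :=
  limn (fun d => beta_d d H K).

End Framework.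

(* The concrete setting: coordinates (i, r, c) with i < k, r, c < p,   *)
(* i.e. k blocks of p x p matrices (k p^2 coordinates).                *)

Section Concrete.
Variables (k p : nat).

Definition Coord := ('I_k * ('I_p * 'I_p))%type.

Definition liftQ_fun (xs : {ffun 'I_k -> {perm 'I_p}}) (j : Coord) : Coord :=
  (j.1, (xs j.1 j.2.1, j.2.2)).

Lemma liftQ_inj xs : injective (liftQ_fun xs).
Proof.
move=> [i [r c]] [i' [r' c']] [ei er ec]; rewrite /= in ei er ec.
subst i' c'; rewrite (perm_inj er) //.
Qed.

Definition liftQ (xs : {ffun 'I_k -> {perm 'I_p}}) : {perm Coord} :=
  perm (@liftQ_inj xs).

Variable C : {set {perm 'I_p}}.

Definition Qc : {set {perm Coord}} :=
  liftQ @: [set xs : {ffun 'I_k -> {perm 'I_p}} | [forall i, xs i \in C]].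

Definition Pc : {set {perm Coord}} :=
  liftQ @: [set xs : {ffun 'I_k -> {perm 'I_p}} |
              [forall i, xs i \in C] && ((\prod_(i < k) xs i)%g == 1%g)].

(* permutation matrix of x : entry (r, c) is 1 iff r = x c *)
Definition permmx (x : {perm 'I_p}) (r c : 'I_p) : bool := r == x c.

Definition Omc : {set {ffun Coord -> bool}} :=
  [set M : {ffun Coord -> bool} |
     [forall i : 'I_k, exists x in C,
        forall r : 'I_p, forall c : 'I_p, M (i, (r, c)) == permmx x r c]].

End Concrete.

(* Q is an abelian p-group, so the conjugations in conditions (d) and (e)
   are trivial and (d) forces U_i <= H_i.  Call H m-local when every x in Q
   outside H is separated from H by at most m of the k blocks.  If U <= H,
   [H : U] < p^(c+1) and U is m-local, then H is (c+1)m-local: a strict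
   chain of subgroups from U up to H has at most c steps and each costs m
   blocks.  Coordinate stabilisers are 1-local, so by induction on d a
   subgroup that is not n-local has beta_d >= p^(c_1 + ... + c_d) for the
   worst c with prod (c_i + 1) > n.  P is not (k-1)-local, since an element
   can be corrected on any free block to have product 1; AM-GM, respectively
   prod (c_i + 1) <= 2^(sum c_i), then give the two bounds, and beta is the
   infimum of the nonincreasing sequence beta_d. *)

From HB Require Import structures.
From mathcomp Require Import all_boot all_order all_algebra all_fingroup all_solvable.
From mathcomp Require Import all_classical all_reals all_analysis.
(* Re-imported so that the finset lemmas shadow their classical_sets namesakes. *)
From mathcomp Require Import fintype finset.
Import Order.TTheory GRing.Theory Num.Theory.

Lemma sub_bigcap_conjg (gT : finGroupType) (U H : {set gT}) :
  (H \subset 'N(U) -> U \subset \bigcap_(h in H) U :^ h)%g.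
Proof. by move=> nUH; apply/bigcapsP => h hH; rewrite (normP (subsetP nUH h hH)). Qed.

Lemma prodgM_abelian [gT : finGroupType] [A : {group gT}] [I : Type] (r : seq I)
    [F G : I -> gT] : abelian A -> (forall i, F i \in A) -> (forall i, G i \in A) ->
  (\prod_(i <- r) (F i * G i) = \prod_(i <- r) F i * \prod_(i <- r) G i)%g.
Proof.
move=> cAA FA GA; elim: r => [|i r IHr]; first by rewrite !big_nil mulg1.
have cGF : commute (G i) (\prod_(j <- r) F j).
  by apply: (centsP cAA); rewrite ?GA ?group_prod.
by rewrite !big_cons IHr -!mulgA; congr (_ * _)%g; rewrite !mulgA cGF.
Qed.

Section Locality.
Local Open Scope group_scope.
Context {gT : finGroupType} {Q : {group gT}} {J : finType} {N : {set J} -> {group gT}}.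
Hypotheses (sub_NQ : forall T, N T \subset Q)
  (N_anti : forall [T T' : {set J}], T \subset T' -> N T' \subset N T).

(* For N T the pointwise stabiliser of the blocks T, x \notin H * N T means
   that no element of H agrees with x on the blocks T. *)
Definition local (m : nat) (H : {set gT}) := forall x, x \in Q -> x \notin H ->
  exists2 T : {set J}, #|T| <= m & x \notin H * N T.

Lemma local_mono [m n : nat] [H : {set gT}] : m <= n -> local m H -> local n H.
Proof.
move=> le_mn lH x xQ xH; have [T cT xT] := lH x xQ xH.
by exists T; first exact: leq_trans le_mn.
Qed.

Lemma localQ m : local m Q.
Proof. by move=> x ->. Qed.

Lemma local_of_sub (H : {group gT}) T : N T \subset H -> local #|T| H.
Proof. by move=> sNH x _ xH; exists T; rewrite ?mulGSid. Qed.

Lemma local_bigcap n r (Hs : 'I_r -> {set gT}) :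
  (forall i, local n (Hs i)) -> local n (Q :&: \bigcap_i Hs i).
Proof.
move=> lHs x xQ xH; have /existsP[i xHi] : [exists i, x \notin Hs i].
  rewrite -negb_forall; apply: contra xH => /forallP xHs.
  by rewrite inE xQ; apply/bigcapP => i _; apply: xHs.
have [T cT xT] := lHs i x xQ xHi.
exists T => //; apply: contra xT; apply/subsetP/mulSg.
exact: subset_trans (subsetIr _ _) (bigcap_inf i isT).
Qed.

Lemma local_of_capN [m T] [U H : {group gT}] : U \subset H ->
  H :&: N T \subset U -> local m U -> local (#|T| + m) H.
Proof.
move=> sUH sHNU lU x xQ xH.
have [xHN | xHN] := boolP (x \in H * N T); last first.
  by exists T; rewrite ?leq_addr.
have [h y hH yN def_x] := mulsgP xHN.
have yU : y \notin U.
  by apply: contra xH => yU; rewrite def_x groupM // (subsetP sUH).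
have [Ty cTy yUN] := lU y (subsetP (sub_NQ T) y yN) yU.
exists (T :|: Ty); first exact: leq_trans (leq_card_setU _ _) (leq_add _ cTy).
apply: contra yUN => /mulsgP[h' y' h'H y'N def_x'].
have y'NT := subsetP (N_anti (subsetUl T Ty)) y' y'N.
have y'NTy := subsetP (N_anti (subsetUr T Ty)) y' y'N.
have def_y : y = (h^-1 * h') * y' by rewrite -mulgA -def_x' def_x mulKg.
rewrite def_y mem_mulg // (subsetP sHNU) // inE groupM ?groupV //=.
by rewrite -[_ * _](mulgK y') -def_y groupM ?groupV.
Qed.

Context {p : nat} (p_pr : prime p).
Hypotheses (cQQ : abelian Q) (pQ : p.-group Q).

Lemma mul_card_proper_pgroup [M M' : {group gT}] : M \subset Q -> M' \proper M ->
  p * #|M'| <= #|M|.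
Proof.
move=> sMQ ltM'M; rewrite -(Lagrange (proper_sub ltM'M)) mulnC leq_mul2l.
apply/orP; right; have lt1_iM : 1 < #|M : M'| by rewrite indexg_gt1 proper_subn.
have [e def_i] := p_natP (pnat_dvd (dvdn_indexg M M') (pgroupS sMQ pQ)).
rewrite def_i in lt1_iM *; case: e {def_i} lt1_iM => [|e] // _.
by rewrite expnS leq_pmulr ?expn_gt0 ?prime_gt0.
Qed.

Lemma local_chain {m} {U : {group gT}} : U \subset Q -> local m U ->
  forall M : {group gT}, U \subset M -> M \subset Q ->
  exists s, exists2 T : {set J},
    #|T| <= s * m & (p ^ s * #|U| <= #|M|) && (M :&: N T \subset U).
Proof.
move=> sUQ lU M; elim: {M}_.+1 {-2}M (ltnSn #|M|) => // n IHn M ltMn sUM sMQ.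
have [sMU | /subsetPn[h hM hU]] := boolP (M \subset U).
  exists 0, set0; rewrite ?cards0 // expn0 mul1n subset_leq_card //=.
  exact: subset_trans (subsetIl _ _) sMU.
have [Th cTh hUN] := lU h (subsetP sMQ h hM) hU.
have cUN : commute U (N Th) := centC (sub_abelian_cent2 cQQ sUQ (sub_NQ Th)).
pose M' := (M :&: (U <*> N Th))%G.
have ltM'M : M' \proper M.
  rewrite properEneq subsetIl andbT; apply: contraNneq hUN => eqM'M.
  by move: hM; rewrite -eqM'M /M' /= inE comm_joingE // => /andP[].
have sUM' : U \subset M' by rewrite subsetI sUM joing_subl.
have [s [T cT /andP[leUM' sM'NU]]] :=
  IHn M' (leq_trans (proper_card ltM'M) (ltnSE ltMn)) sUM'
      (subset_trans (proper_sub ltM'M) sMQ).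
exists s.+1, (T :|: Th).
  by rewrite mulSn addnC (leq_trans (leq_card_setU _ _)) ?leq_add.
apply/andP; split.
  rewrite expnS -mulnA (leq_trans _ (mul_card_proper_pgroup sMQ ltM'M)) //.
  by rewrite leq_mul2l leUM' orbT.
apply: subset_trans sM'NU; rewrite !subsetI subsetIl /=.
rewrite (subset_trans (subsetIr _ _) (N_anti (subsetUl T Th))) andbT.
exact: subset_trans (subsetIr _ _) (subset_trans (N_anti (subsetUr T Th)) (joing_subr _ _)).
Qed.

Lemma local_index [m] [U H : {group gT}] : U \subset H -> H \subset Q -> local m U ->
  local ((trunc_log p #|H : U|).+1 * m) H.
Proof.
move=> sUH sHQ lU.
have [s [T cT /andP[leUH sHNU]]] := local_chain (subset_trans sUH sHQ) lU H sUH sHQ.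
have le_s_log : s <= trunc_log p #|H : U|.
  apply: trunc_log_max (prime_gt1 p_pr) _.
  by rewrite -(leq_pmul2r (cardG_gt0 U)) [X in _ <= X]mulnC Lagrange.
apply: local_mono (local_of_capN sUH sHNU lU).
by rewrite mulSn addnC leq_add2l (leq_trans cT) ?leq_mul2r ?le_s_log ?orbT.
Qed.

End Locality.

Arguments local {gT} Q {J} N m H.

Section CoordinateAction.
Local Open Scope group_scope.
Variable I : finType.

Lemma coord_act1 (x : {ffun I -> bool}) : coord_act 1 x = x.
Proof. by apply/ffunP => j; rewrite ffunE invg1 perm1. Qed.

Lemma coord_actM (s t : {perm I}) (x : {ffun I -> bool}) :
  coord_act (s * t) x = coord_act t (coord_act s x).
Proof. by apply/ffunP => j; rewrite !ffunE invMg permM. Qed.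

End CoordinateAction.

Section Framework.
Local Open Scope group_scope.
Context {R : realType} {I : finType} {Q : {group {perm I}}} {Om : {set {ffun I -> bool}}}.
Hypothesis actQ_Om : forall [s x], s \in Q -> x \in Om -> coord_act s x \in Om.

Lemma group_set_Stab (T : eqType) (f : {ffun I -> bool} -> T) :
  group_set (Stab Q Om f).
Proof.
apply/group_setP; split.
  by rewrite inE group1; apply/forall_inP => x _; rewrite coord_act1.
move=> s t /setIdP[sQ /forall_inP sf] /setIdP[tQ /forall_inP tf].
rewrite inE groupM //; apply/forall_inP => x xOm.
by rewrite coord_actM (eqP (tf _ (actQ_Om sQ xOm))) sf.
Qed.

Local Open Scope ereal_scope.

Lemma beta_d_ge0 d (H K : {set {perm I}}) : 0 <= beta_d R Q Om d H K.
Proof.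
case: d => [|d] /=; first by rewrite /beta0; do 2 case: ifP => _ //; rewrite leey.
apply: le_ereal_inf_tmp => _ [r [Hs [Us [Ls [Vs [_ [_ [_ [_ [_ [_ [_ ->]]]]]]]]]]]].
exact: bigmax_ge_id.
Qed.

Lemma beta_succ_le0 d (K : {set {perm I}}) : Q \subset K -> beta_d R Q Om d.+1 Q K <= 0.
Proof.
move=> sQK; apply: ge_ereal_inf; exists 0 => //.
exists 0%N, (fun=> 1%G), (fun=> 1%G), (fun=> 1%G), (fun=> 1%G).
by do 7 (split; first by rewrite ?big_ord0 ?setIT // => -[]); rewrite big_ord0.
Qed.

Lemma beta_succ_le_diag d (H : {group {perm I}}) (K : {set {perm I}}) :
    inN Q Om H -> inB Q Om H -> H \subset Q -> H \subset K ->
  beta_d R Q Om d.+1 H K <= beta_d R Q Om d H H.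
Proof.
move=> NH BH sHQ sHK; apply: ge_ereal_inf.
exists (\big[maxe/0]_(i < 1) ((#|H : H :&: H|%:R)%:E * beta_d R Q Om d H H)).
  exists 1%N, (fun=> H), (fun=> H), (fun=> H), (fun=> H).
  have sHcapH : \bigcap_(h in H) H :^ h \subset H.
    by rewrite (subset_trans (bigcap_inf 1%g (group1 H))) ?conjsg1.
  rewrite big_ord1 (setIidPr sHQ).
  by do 7 (split; first by try move=> ?).
by apply: bigmax_le (beta_d_ge0 _ _ _) _ => i _; rewrite setIid indexgg mul1e.
Qed.

Lemma beta_d_succ_le d (H K : {set {perm I}}) : H \subset K ->
  beta_d R Q Om d.+1 H K <= beta_d R Q Om d H K.
Proof.
elim: d H K => [|d IHd] H K sHK.
  rewrite [X in _ <= X]/= /beta0; case: ifP => [/eqP defH | _].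
    by rewrite defH beta_succ_le0 // -defH.
  case: ifP => [/andP[ltHQ /existsP[j /eqP defH]] | _]; last by rewrite leey.
  pose G := Group (group_set_Stab _ (fun x => x j)).
  rewrite defH in ltHQ sHK *; apply: le_trans (beta_succ_le_diag 0 G K _ _ _ sHK) _.
  - by exists (fun x : {ffun I -> bool} => nat_of_bool (x j)); apply/setP => s;
      rewrite !inE; congr (_ && _); apply: eq_forallb => x; do 2 case: (_ j).
  - by exists (fun x : {ffun I -> bool} => x j).
  - exact: proper_sub.
  rewrite /= /beta0 (negPf (proper_neq ltHQ)) ltHQ.
  by case: existsP => // -[]; exists j.
apply: le_ereal_inf_tmp => _
  [r [Hs [Us [Ls [Vs [HUQ [LVNB [sUV [defH [sLK [sUH [sVL ->]]]]]]]]]]]].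
apply: ge_ereal_inf; eexists; first by exists r, Hs, Us, Ls, Vs.
apply: le_bigmax2 => i _; rewrite lee_wpmul2l ?lee_fin //.
exact: IHd (sUV i).1.
Qed.

Lemma beta_ge (H K : {set {perm I}}) z : H \subset K ->
  (forall d, z <= beta_d R Q Om d H K) -> z <= beta R Q Om H K.
Proof.
move=> sHK zb; have beta_noninc : {homo (fun d => beta_d R Q Om d H K) :
    m n / (m <= n)%N >-> n <= m}.
  apply: homo_leq => [x | x y t yx tx | d]; [exact: lexx | exact: le_trans tx yx |].
  exact: beta_d_succ_le.
rewrite /beta (cvg_lim _ (ereal_nonincreasing_cvgn beta_noninc)) //.
by apply: le_ereal_inf_tmp => _ [d _ <-].
Qed.

End Framework.

(* The c_i are the p-adic logarithms of the indices [H_i : U_i] met along one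
   branch of the recursion defining beta_d. *)
Definition profile_bound {R : realType} (p n d : nat) (z : R) : Prop :=
  forall cs : seq nat, size cs = d -> n < \prod_(c <- cs) c.+1 ->
    (z <= p%:R ^+ (\sum_(c <- cs) c))%R.

Lemma profile_bound_cons {R : realType} [p n d : nat] (c : nat) [z : R] : 0 < p ->
  profile_bound p n d.+1 z -> profile_bound p (n %/ c.+1) d (z / p%:R ^+ c)%R.
Proof.
move=> p_gt0 zb cs size_cs lt_n_cs.
have := zb (c :: cs); rewrite /= size_cs !big_cons exprD mulnC -ltn_divLR //.
move=> /(_ erefl lt_n_cs) le_z.
by rewrite ler_pdivrMr ?exprn_gt0 ?ltr0n // mulrC.
Qed.

Lemma prod_succ_le_exp2 (cs : seq nat) :
  \prod_(c <- cs) c.+1 <= 2 ^ (\sum_(c <- cs) c).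
Proof.
elim: cs => [|c cs IHcs]; first by rewrite !big_nil.
by rewrite !big_cons expnD leq_mul // ltn_expl.
Qed.

Section RealBounds.
Local Open Scope ring_scope.
Variable R : realType.

Lemma log2_le_sum (k : nat) (cs : seq nat) : (0 < k)%N ->
  (k <= \prod_(c <- cs) c.+1)%N -> ln (k%:R : R) / ln 2 <= (\sum_(c <- cs) c)%:R.
Proof.
move=> k_gt0 le_k_prod; have ln2_gt0 : (0 : R) < ln 2 by rewrite ln_gt0 ?ltr1n.
rewrite ler_pdivrMr // mulr_natl -lnXn ?ltr0n // ler_ln ?posrE ?ltr0n ?exprn_gt0 //.
by rewrite -natrX ler_nat (leq_trans le_k_prod (prod_succ_le_exp2 cs)).
Qed.

Lemma AGM_sum_lower_bound (k d : nat) (cs : seq nat) : (0 < d)%N -> size cs = d ->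
    (k <= \prod_(c <- cs) c.+1)%N ->
  d%:R * ((k%:R : R) `^ d%:R^-1 - 1) <= (\sum_(c <- cs) c)%:R.
Proof.
move=> d_gt0 size_cs le_k_prod; have d_gt0R : (0 : R) < d%:R by rewrite ltr0n.
pose E (i : 'I_d) : R := (nth 0%N cs i).+1%:R.
pose mu := (\sum_i E i) / d%:R.
have sumE : \sum_i E i = (\sum_(c <- cs) c + d)%:R.
  rewrite -[X in (_ + X)%N]size_cs -sum1_size -big_split /E -natr_sum.
  rewrite [in RHS](big_nth 0%N) big_mkord size_cs.
  by congr (_%:R); apply: eq_bigr => i _; rewrite /= addn1.
have le_k_mu : (k%:R : R) <= mu ^+ d.
  have := leif_le (leif_AGM (A := 'I_d) (E := E) (fun i _ => ler0n _ _)).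
  rewrite card_ord; apply: le_trans.
  rewrite (_ : \prod_(i in 'I_d) E i = (\prod_(c <- cs) c.+1)%:R) ?ler_nat //.
  by rewrite natr_prod (big_nth 0%N) big_mkord size_cs; apply: eq_bigr.
have mu_ge0 : 0 <= mu by rewrite divr_ge0 // sumE.
have le_root_mu : (k%:R : R) `^ d%:R^-1 <= mu.
  have -> : mu = (mu ^+ d) `^ d%:R^-1.
    by rewrite -powR_mulrn // -powRrM mulfV ?gt_eqF // powRr1.
  by rewrite ge0_ler_powR ?invr_ge0 ?nnegrE ?exprn_ge0.
rewrite -(ler_pM2l d_gt0R) /mu sumE [X in _ <= X]mulrC divfK ?gt_eqF // natrD in le_root_mu.
by rewrite mulrBr mulr1 lerBlDr.
Qed.

Lemma profile_bound_powR (p n d : nat) (e : R) : (0 < p)%N ->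
  (forall cs : seq nat, size cs = d -> (n < \prod_(c <- cs) c.+1)%N ->
     e <= (\sum_(c <- cs) c)%:R) ->
  profile_bound p n d (p%:R `^ e).
Proof.
move=> p_gt0 le_e cs size_cs lt_n_prod.
by rewrite -powR_mulrn ?ler0n // ler_powR ?ler1n ?le_e.
Qed.

End RealBounds.

Section BetaLowerBound.
Local Open Scope group_scope.
Context {R : realType} {I : finType} {Q : {group {perm I}}} {Om : {set {ffun I -> bool}}}.
Context {J : finType} {N : {set J} -> {group {perm I}}} {p : nat}.
Hypotheses (p_pr : prime p) (cQQ : abelian Q) (pQ : p.-group Q).
Hypotheses (sub_NQ : forall T, N T \subset Q)
  (N_anti : forall [T T' : {set J}], T \subset T' -> N T' \subset N T).
Hypothesis local_coord : forall j, local Q N 1 (Stab Q Om (fun x => x j)).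

Lemma beta_d_ge_profile d (H K : {set {perm I}}) n (z : R) :
  ~ local Q N n H -> profile_bound p n d z -> (z%:E <= beta_d R Q Om d H K)%E.
Proof.
elim: d H K n z => [|d IHd] H K n z nlH zb /=.
  rewrite /beta0; case: ifP => [/eqP defH | _].
    by case: nlH; rewrite defH; apply: localQ.
  case: ifP => [/andP[_ /existsP[j /eqP defH]] | _]; last by rewrite leey.
  case: n nlH zb => [|n] nlH zb.
    by rewrite lee_fin; have := zb [::]; rewrite !big_nil expr0; apply.
  by case: nlH; rewrite defH; apply: local_mono (local_coord j).
apply: le_ereal_inf_tmp => _ [r [Hs [Us [Ls [Vs [HUQ [_ [_ [defH [_ [capUH [_ ->]]]]]]]]]]]].
pose c i := trunc_log p #|Hs i : Us i|.
have sUH i : Us i \subset Hs i.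
  apply: subset_trans (capUH i); apply: sub_bigcap_conjg.
  exact: subset_trans (HUQ i).1 (sub_abelian_norm cQQ (HUQ i).2).
have [i nlU] : exists i, ~ local Q N (n %/ (c i).+1) (Us i).
  apply/existsNP => lU; apply: nlH; rewrite -defH; apply: local_bigcap => i.
  apply: local_mono (local_index sub_NQ N_anti p_pr cQQ pQ (sUH i) (HUQ i).1 (lU i)).
  by rewrite mulnC leq_divM.
apply: le_trans (le_bigmax _ _ i); rewrite /= (setIidPr (sUH i)).
have pc_gt0 : (0 < p%:R ^+ c i :> R)%R by rewrite exprn_gt0 ?ltr0n ?prime_gt0.
have le_z_beta := IHd (Us i) (Vs i) _ _ nlU (profile_bound_cons (c i) (prime_gt0 p_pr) zb).
apply: (@le_trans _ _ ((p%:R ^+ c i)%:E * beta_d R Q Om d (Us i) (Vs i))%E).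
  apply: le_trans (lee_wpmul2l _ le_z_beta); last by rewrite lee_fin ltW.
  by rewrite -EFinM mulrC divfK ?gt_eqF.
rewrite lee_wpmul2r ?beta_d_ge0 // lee_fin -natrX ler_nat.
by rewrite trunc_logP ?prime_gt1 ?indexg_gt0.
Qed.

End BetaLowerBound.

Section BlockPermutations.
Local Open Scope group_scope.
Context {p : nat} (C : {group {perm 'I_p}}) (k : nat).

Local Notation Coord := (Coord k p).
Local Notation family := {ffun 'I_k -> {perm 'I_p}}.

Lemma liftQE (xs : family) c : liftQ xs c = (c.1, (xs c.1 c.2.1, c.2.2)).
Proof. by rewrite permE. Qed.

Lemma liftQM (xs ys : family) : liftQ xs * liftQ ys = liftQ [ffun i => xs i * ys i].
Proof. by apply/permP => c; rewrite permM !liftQE ffunE permM. Qed.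

Lemma liftQ_inj : injective (@liftQ k p).
Proof.
move=> xs ys eq_xy; apply/ffunP => i; apply/permP => r.
by move/(congr1 (fun s : {perm Coord} => (s (i, (r, r))).2.1)): eq_xy; rewrite !liftQE.
Qed.

Lemma mem_liftQ (xs : family) : (forall i, xs i \in C) -> liftQ xs \in Qc k C.
Proof. by move=> xsC; apply: imset_f; rewrite inE; apply/forallP. Qed.

Lemma group_set_Qc : group_set (Qc k C).
Proof.
apply/group_setP; split.
  have -> : 1 = liftQ ([ffun=> 1] : family).
    by apply/permP => -[i [r c]]; rewrite liftQE ffunE !perm1.
  by apply: mem_liftQ => i; rewrite ffunE.
move=> _ _ /imsetP[xs + ->] /imsetP[ys + ->]; rewrite !inE => /forallP xsC /forallP ysC.
by rewrite liftQM; apply: mem_liftQ => i; rewrite ffunE groupM ?xsC ?ysC.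
Qed.

Canonical Qc_group := Group group_set_Qc.

Lemma abelian_Qc : abelian C -> abelian Qc_group.
Proof.
move=> cCC; apply/centsP => _ /imsetP[xs + ->] _ /imsetP[ys + ->].
rewrite !inE => /forallP xsC /forallP ysC; rewrite /commute !liftQM.
by congr liftQ; apply/ffunP => i; rewrite !ffunE (centsP cCC _ (xsC i) _ (ysC i)).
Qed.

Lemma card_Qc : #|Qc k C| = (#|C| ^ k)%N.
Proof.
rewrite card_imset; last exact: liftQ_inj.
rewrite -[in RHS](card_ord k) -card_ffun_on; apply: eq_card => xs.
by rewrite inE; apply/forallP/ffun_onP.
Qed.

Lemma pgroup_Qc : #|C| = p -> prime p -> p.-group Qc_group.
Proof. by move=> oC p_pr; rewrite /pgroup card_Qc oC pnatX pnat_id. Qed.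

Definition block (T : {set 'I_k}) : {set Coord} := [set c | c.1 \in T].

Definition block_stab (T : {set 'I_k}) := 'C_(Qc_group)(block T | 'P)%G.

Lemma block_stab_sub (T : {set 'I_k}) : block_stab T \subset Qc_group.
Proof. exact: subsetIl. Qed.

Lemma block_stab_anti [T T' : {set 'I_k}] : T \subset T' -> block_stab T' \subset block_stab T.
Proof.
move=> sTT'; apply/setIS/astabS/subsetP => c; rewrite !inE; exact: (subsetP sTT').
Qed.

Lemma liftQVE (xs : family) c : (liftQ xs)^-1 c = (c.1, ((xs c.1)^-1 c.2.1, c.2.2)).
Proof. by apply: (canLR (permK (liftQ xs))); rewrite liftQE permKV; case: c => ? []. Qed.

Lemma coord_act_Omc s M : s \in Qc_group -> M \in Omc k C -> coord_act s M \in Omc k C.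
Proof.
move=> /imsetP[xs + ->]; rewrite !inE => /forallP xsC /forallP MOm.
apply/forallP => i; have /exists_inP[y yC /forallP My] := MOm i.
apply/exists_inP; exists (y * xs i); first by rewrite groupM ?xsC.
apply/forallP => r; apply/forallP => c; rewrite ffunE liftQVE /=.
rewrite (eqP (forallP (My _) c)) /permmx permM.
by rewrite -(inj_eq (@perm_inj _ (xs i))) permKV.
Qed.

Lemma local_coord_Qc j :
  local Qc_group block_stab 1 (Stab (Qc k C) (Omc k C) (fun M => M j)).
Proof.
rewrite -(cards1 j.1).
apply: (local_of_sub (Group (group_set_Stab coord_act_Omc _ (fun M => M j)))).
apply/subsetP => s /setIP[sQ /astabP fix_s]; rewrite inE sQ /=.
have sj : s j = j by apply: fix_s; rewrite inE set11.
by apply/forall_inP => M _; rewrite ffunE -{1}sj permK.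
Qed.

Definition single (a : 'I_k) (g : {perm 'I_p}) : family :=
  [ffun i => if i == a then g else 1].

Lemma single_in a g i : g \in C -> single a g i \in C.
Proof. by move=> gC; rewrite ffunE; case: ifP; rewrite ?group1. Qed.

Lemma prod_single a g : \prod_(i < k) single a g i = g.
Proof. by under eq_bigr do rewrite ffunE; rewrite -big_mkcond big_pred1_eq. Qed.

Lemma Pc_not_local : 0 < k -> 1 < #|C| -> abelian C ->
  ~ local Qc_group block_stab k.-1 (Pc k C).
Proof.
move=> k_gt0 ntC cCC lP.
have [g gC ntg] : exists2 g, g \in C & g != 1 by apply/trivgPn; rewrite -cardG_gt1.
pose i0 : 'I_k := Ordinal k_gt0.
have xQ : liftQ (single i0 g) \in Qc_group by apply: mem_liftQ => i; apply: single_in.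
have xP : liftQ (single i0 g) \notin Pc k C.
  apply/imsetP => -[ys + /liftQ_inj def_ys]; rewrite -def_ys inE prod_single.
  by case/andP => _ /eqP g1; rewrite g1 eqxx in ntg.
have [T cT] := lP _ xQ xP; apply/negP/negPn.
have /subsetPn[j _ jT] : ~~ ([set: 'I_k] \subset T).
  by apply: contraTN cT => /subset_leq_card; rewrite cardsT card_ord -ltnNge prednK.
pose y : family := [ffun i => single i0 g i * single j g^-1 i].
have yP : liftQ y \in Pc k C.
  apply: imset_f; rewrite inE; apply/andP; split.
    by apply/forallP => i; rewrite ffunE groupM ?single_in ?groupV.
  under eq_bigr do rewrite ffunE.
  rewrite (prodgM_abelian _ cCC) => [|i|i]; rewrite ?single_in ?groupV //.
  by rewrite !prod_single mulgV.
have zN : liftQ (single j g) \in block_stab T.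
  rewrite inE mem_liftQ => [|i]; last exact: single_in.
  apply/astabP => -[i [r c]]; rewrite inE /= apermE liftQE ffunE => iT.
  have ij : i != j by apply: contraNneq jT => <-.
  by rewrite (negPf ij) perm1.
apply/mulsgP; exists (liftQ y) (liftQ (single j g)) => //.
rewrite liftQM; congr liftQ; apply/ffunP => i; rewrite !ffunE -mulgA.
by case: (i == j); rewrite ?mulVg ?mulg1.
Qed.

End BlockPermutations.

Local Open Scope ring_scope.

Theorem theorem6p18 (R : realType) (p : nat) (hp : prime p)
    (C : {group {perm 'I_p}}) (hcyc : cyclic C) (hCp : #|C| = p)
    (hreg : [transitive C, on [set: 'I_p] | 'P]) (k : nat) (hk : (0 < k)%N) :
  (forall d : nat, (0 < d)%N ->
     ((p%:R `^ (d%:R * (k%:R `^ (d%:R)^-1 - 1)))%:E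
        <= beta_d R (Qc k C) (Omc k C) d (Pc k C) (Pc k C))%E) /\
  ((p%:R `^ (ln (k%:R : R) / ln 2))%:E
     <= beta R (Qc k C) (Omc k C) (Pc k C) (Pc k C))%E.
Proof.
have p_gt0 := prime_gt0 hp; have cCC := cyclic_abelian hcyc.
have nlP : ~ local (Qc_group C k) (block_stab C k) k.-1 (Pc k C).
  by apply: Pc_not_local; rewrite ?hCp ?prime_gt1.
have beta_P d (z : R) : profile_bound p k.-1 d z ->
    (z%:E <= beta_d R (Qc k C) (Omc k C) d (Pc k C) (Pc k C))%E.
  exact: (beta_d_ge_profile hp (abelian_Qc C k cCC) (pgroup_Qc C k hCp hp)
    (block_stab_sub C k) (block_stab_anti C k) (local_coord_Qc C k) d _ _ _ _ nlP).
split=> [d d_gt0 | ].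
  apply/beta_P/profile_bound_powR => // cs size_cs.
  by rewrite prednK // => le_k_prod; apply: AGM_sum_lower_bound.
apply: (beta_ge (coord_act_Omc C k)) => // d.
apply/beta_P/profile_bound_powR => // cs _.
by rewrite prednK // => le_k_prod; apply: log2_le_sum.
Qed.
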